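(* Let $n\ge1$ and let $T\in\mathcal{L}(\mathcal{H})$ be $n$-EP. Then $T^{2n}\ge 0$ if and only if $T^{2n-1}\omega(T)\ge0$.
   Context: $\mathcal{H}$ is a Hilbert space, $\mathcal{L}(\mathcal{H})$ the bounded operators on it; for $A\in\mathcal{L}(\mathcal{H})$, $A\ge0$ means $A$ is a positive operator ($\langle Ax,x\rangle\ge0$ for all $x$). For $T$ with closed range, $T^\dagger$ is its Moore–Penrose inverse (unique solution of $TT^\dagger T=T$, $T^\dagger TT^\dagger=T^\dagger$, $(T^\dagger T)^*=T^\dagger T$, $(TT^\dagger)^*=TT^\dagger$) and $\omega(T)=T(T^*T)^\dagger=(T^\dagger)^*$ is its Cauchy dual. $T$ is $n$-EP if it has closed range and $T^nT^\dagger=T^\dagger T^n$. *)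

From HB Require Import structures.
From mathcomp Require Import all_boot all_order all_algebra.
From mathcomp Require Import complex.
From mathcomp Require Import reals.
Set Implicit Arguments. Unset Strict Implicit. Unset Printing Implicit Defensive.
Import Order.TTheory GRing.Theory Num.Theory.
Local Open Scope ring_scope.

Section Hilbert.
Variables (R : realType) (V : lmodType R[i]) (ip : V -> V -> R[i]).

Definition hnorm (x : V) : R := Num.sqrt (complex.Re (ip x x)).

Definition hcauchy (u : nat -> V) : Prop :=
  forall e : R, 0 < e -> exists N : nat, forall m k : nat,
    (N <= m)%N -> (N <= k)%N -> hnorm (u m - u k) < e.

Definition hconverges (u : nat -> V) (l : V) : Prop :=
  forall e : R, 0 < e -> exists N : nat, forall m : nat,
    (N <= m)%N -> hnorm (u m - l) < e.

(* ip is an inner product (linear in the first variable) making V a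
   complex Hilbert space *)
Definition is_hilbert : Prop :=
  [/\ (forall (a : R[i]) (x y z : V), ip (a *: x + y) z = a * ip x z + ip y z),
      (forall x y : V, ip y x = (ip x y)^*),
      (forall x : V, 0 <= ip x x),
      (forall x : V, ip x x = 0 -> x = 0)
    & (forall u : nat -> V, hcauchy u -> exists l, hconverges u l)].

Definition bounded_op (T : V -> V) : Prop :=
  (forall (a : R[i]) (x y : V), T (a *: x + y) = a *: T x + T y) /\
  exists M : R, forall x : V, hnorm (T x) <= M * hnorm x.

Definition is_adjoint (A B : V -> V) : Prop :=
  forall x y : V, ip (A x) y = ip x (B y).

Definition positive_op (A : V -> V) : Prop :=
  forall x : V, 0 <= ip (A x) x.

Definition closed_range (T : V -> V) : Prop :=
  forall (u : nat -> V) (y : V), (forall k, exists x, u k = T x) ->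
    hconverges u y -> exists x, y = T x.

(* S is the Moore-Penrose inverse of T (it is unique when it exists) *)
Definition is_MP_inverse (T S : V -> V) : Prop :=
  [/\ bounded_op S,
      (forall x, T (S (T x)) = T x),
      (forall x, S (T (S x)) = S x),
      is_adjoint (S \o T) (S \o T)
    & is_adjoint (T \o S) (T \o S)].

Definition n_EP (n : nat) (T : V -> V) : Prop :=
  closed_range T /\
  exists S, is_MP_inverse T S /\ forall x, iter n T (S x) = S (iter n T x).

(* W = omega(T) = (T^dagger)^* is the Cauchy dual of T *)
Definition is_cauchy_dual (T W : V -> V) : Prop :=
  exists S, is_MP_inverse T S /\ is_adjoint S W.

End Hilbert.

(* Let S be the Moore-Penrose inverse of T and W = S^*.  The projection
   P = TS fixes the ranges of W and of T^(2n), and n-EP-ness makes S commute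
   with T^(2n).  Hence T^(2n-1) W = S T^(2n) W, so that
   <T^(2n-1) W y, y> = <T^(2n) W y, W y>, while <T^(2n) x, x> = <T^(2n) u, u>
   with u = P x.  The forward implication is then immediate; for the converse
   it suffices to approximate every u = P u by vectors W y.  On the range of P
   the step r |-> r - c W S r, with 1/c a bound for |S|^2, shrinks |r|^2 by a
   fixed factor < 1, so iterating it from r = u yields y with |u - W y|
   arbitrarily small, without any appeal to completeness. *)

From HB Require Import structures.
From mathcomp Require Import all_boot all_order all_algebra.
From mathcomp Require Import complex reals ring lra.
Import Order.TTheory GRing.Theory Num.Theory.
(* ring_scope last, so that [^*] is [Num.conj] as in [is_hilbert]. *)
Local Open Scope complex_scope.
Local Open Scope ring_scope.
Set Implicit Arguments.
Unset Strict Implicit.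
Unset Printing Implicit Defensive.

Section ComplexApprox.
Variable R : rcfType.

Definition ReIm_le (z : R[i]) (b : R) :=
  `|complex.Re z| <= b /\ `|complex.Im z| <= b.

Lemma ReIm_leW z b b' : b <= b' -> ReIm_le z b -> ReIm_le z b'.
Proof. by move=> bb' [hRe hIm]; split; apply: le_trans bb'. Qed.

Lemma ReIm_leD z z' b b' :
  ReIm_le z b -> ReIm_le z' b' -> ReIm_le (z + z') (b + b').
Proof.
case: z z' => [a c] [a' c'] [/= ha hc] [/= ha' hc'].
by split; apply: le_trans (ler_normD _ _) _; apply: lerD.
Qed.

Lemma ReIm_leN z b : ReIm_le z b -> ReIm_le (- z) b.
Proof. by case: z => a c [/= ha hc]; split; rewrite /= normrN. Qed.

Lemma ge0_ReIm_approx (z : R[i]) (C : R) : 0 < C ->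
  (forall eps, 0 < eps -> eps <= 1 ->
     exists2 w, 0 <= w & ReIm_le (z - w) (eps * C)) -> 0 <= z.
Proof.
have parts w e : 0 <= w -> ReIm_le (z - w) e ->
    `|complex.Im z| <= e /\ 0 <= complex.Re z + e.
  case: z w => [a b] [c d]; rewrite lecE /= => /andP[/eqP -> c0] [].
  by rewrite /= oppr0 addr0 => /ler_normlP[hRe _] hIm; split=> //; lra.
move=> C0 approx.
have near e : 0 < e -> exists2 w, 0 <= w & ReIm_le (z - w) e.
  move=> e0; have eps0 : 0 < Num.min 1 (e / C) by rewrite lt_min ltr01 divr_gt0.
  have [w w0 zw] := approx _ eps0 ltac:(by rewrite ge_min lexx).
  exists w => //; apply: ReIm_leW zw.
  by rewrite -ler_pdivlMr // ge_min lexx orbT.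
rewrite lecE /=; apply/andP; split.
  rewrite -normr_eq0 eq_le normr_ge0 andbT.
  by apply/ler_addgt0Pr => e /near[w w0 /(parts _ _ w0)[? _]]; rewrite add0r.
by apply/ler_addgt0Pr => e /near[w w0 /(parts _ _ w0)[_ ?]].
Qed.

End ComplexApprox.

Section InnerProduct.
Variables (R : realType) (V : lmodType R[i]) (ip : V -> V -> R[i]).
Hypothesis ipH : is_hilbert ip.

Lemma ipDZl a x y z : ip (a *: x + y) z = a * ip x z + ip y z.
Proof. by case: ipH. Qed.

Lemma ipC x y : ip y x = (ip x y)^*.
Proof. by case: ipH. Qed.

Lemma ipxx_ge0 x : 0 <= ip x x.
Proof. by case: ipH. Qed.

Lemma ipxx_eq0 x : ip x x = 0 -> x = 0.
Proof. by case: ipH => _ _ _ def _; exact: def. Qed.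

Lemma ipDl x y z : ip (x + y) z = ip x z + ip y z.
Proof. by rewrite -[x]scale1r ipDZl mul1r scale1r. Qed.

Lemma ipBl x y z : ip (x - y) z = ip x z - ip y z.
Proof. by rewrite addrC -scaleN1r ipDZl mulN1r addrC. Qed.

Lemma ipZl a x z : ip (a *: x) z = a * ip x z.
Proof. by rewrite -[a *: x]addr0 ipDZl -(subrr x) ipBl subrr addr0. Qed.

Lemma ipDr x y z : ip z (x + y) = ip z x + ip z y.
Proof. by rewrite ipC ipDl rmorphD (ipC x z) (ipC y z). Qed.

Lemma ipBr x y z : ip z (x - y) = ip z x - ip z y.
Proof. by rewrite ipC ipBl rmorphB (ipC x z) (ipC y z). Qed.

Lemma ipZr a x z : ip z (a *: x) = a^* * ip z x.
Proof. by rewrite ipC ipZl rmorphM (ipC x z). Qed.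

Lemma ipr_ext u v : (forall z, ip z u = ip z v) -> u = v.
Proof.
move=> uv; apply/eqP; rewrite -subr_eq0; apply/eqP/ipxx_eq0.
by rewrite ipBr uv subrr.
Qed.

Definition sqnorm x := complex.Re (ip x x).

Lemma sqnorm_ge0 x : 0 <= sqnorm x.
Proof. by have := ipxx_ge0 x; rewrite lecE => /andP[]. Qed.

Lemma Re_ipC x y : complex.Re (ip y x) = complex.Re (ip x y).
Proof. by rewrite ipC; case: (ip x y). Qed.

Lemma Im_ipC x y : complex.Im (ip y x) = - complex.Im (ip x y).
Proof. by rewrite ipC; case: (ip x y). Qed.

Lemma sqnormB x y :
  sqnorm (x - y) = sqnorm x - 2 * complex.Re (ip x y) + sqnorm y.
Proof.
rewrite /sqnorm ipBl !ipBr (ipC x y).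
by case: (ip x y) (ip x x) (ip y y) => [a b] [c d] [e f] /=; lra.
Qed.

Lemma sqnormZ (t : R) x : sqnorm (t%:C *: x) = t ^+ 2 * sqnorm x.
Proof.
by rewrite /sqnorm ipZl ipZr; case: (ip x x) => a b /=; rewrite expr2; lra.
Qed.

Lemma Re_ipZr (t : R) x y :
  complex.Re (ip x (t%:C *: y)) = t * complex.Re (ip x y).
Proof. by rewrite ipZr; case: (ip x y) => a b /=; lra. Qed.

Lemma sqnorm_iZ x : sqnorm ('i%C *: x) = sqnorm x.
Proof. by rewrite /sqnorm ipZl ipZr; case: (ip x x) => a b /=; lra. Qed.

Lemma Re_ip_iZr x y : complex.Re (ip x ('i%C *: y)) = complex.Im (ip x y).
Proof. by rewrite ipZr; case: (ip x y) => a b /=; lra. Qed.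

Lemma Re_ip_le x y (t : R) :
  0 < t -> 2 * complex.Re (ip x y) <= t * sqnorm x + sqnorm y / t.
Proof.
move=> t0; have := sqnorm_ge0 (t%:C *: x - y).
rewrite sqnormB sqnormZ ipZl => h.
have -> : t * sqnorm x + sqnorm y / t = (t ^+ 2 * sqnorm x + sqnorm y) / t.
  by field; rewrite gt_eqF.
rewrite ler_pdivlMr //.
move: h; case: (ip x y) => a b /=; nra.
Qed.

Lemma ReIm_le_ip x y e :
  0 < e -> sqnorm y <= e ^+ 2 -> ReIm_le (ip x y) (e * (sqnorm x + 1)).
Proof.
move=> e0; have Re_le v : sqnorm v <= e ^+ 2 ->
    `|complex.Re (ip x v)| <= e * (sqnorm x + 1).
  have half w : sqnorm w <= e ^+ 2 ->
      2 * complex.Re (ip x w) <= e * (sqnorm x + 1).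
    move=> we; apply: le_trans (Re_ip_le x w e0) _.
    rewrite mulrDr mulr1 lerD2l ler_pdivrMr // -expr2 //.
  move=> ve; have := half _ ve.
  have := half ((-1)%:C *: v); rewrite sqnormZ Re_ipZr sqrrN expr1n mul1r.
  by move=> /(_ ve) h1 h2; rewrite ler_norml; apply/andP; split; lra.
move=> ye; split; first exact: Re_le.
by rewrite -Re_ip_iZr; apply: Re_le; rewrite sqnorm_iZ.
Qed.

Lemma ReIm_le_ipC x y e :
  0 < e -> sqnorm y <= e ^+ 2 -> ReIm_le (ip y x) (e * (sqnorm x + 1)).
Proof. by rewrite /ReIm_le Re_ipC Im_ipC normrN; exact: ReIm_le_ip. Qed.

End InnerProduct.

Lemma linB (R : pzRingType) (U : lmodType R) (f : U -> U) :
  linear f -> forall x y, f (x - y) = f x - f y.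
Proof. by move=> fL x y; rewrite addrC -scaleN1r fL scaleN1r addrC. Qed.

Lemma linear_iter (R : pzRingType) (U : lmodType R) (f : U -> U) k :
  linear f -> linear (iter k f).
Proof. by move=> fL; elim: k => [|k IHk] a x y //=; rewrite IHk fL. Qed.

Lemma descent_le (R : archiRealFieldType) (P : R -> Prop) (g v0 : R) :
  0 < g -> P v0 -> (forall v, P v -> 0 <= v) ->
  (forall v, P v -> exists2 v', P v' & v' <= v - g * v) ->
  forall d, 0 < d -> exists2 v, P v & v <= d.
Proof.
move=> g0 Pv0 P_ge0 step d d0.
have gd0 : 0 < g * d by rewrite mulr_gt0.
have iter_step k : exists2 v, P v & v <= d \/ v <= v0 - k%:R * (g * d).
  elim: k => [|k [v Pv [vd|vk]]]; first by exists v0; [|right; lra].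
  - by exists v => //; left.
  - have [vd|dv] := lerP v d; first by exists v => //; left.
    have [v' Pv' v'v] := step v Pv; exists v' => //; right.
    have : g * d <= g * v by rewrite ler_pM2l // ltW.
    by rewrite -natr1 mulrDl mul1r; lra.
have := archi_boundP (divr_ge0 (P_ge0 _ Pv0) (ltW gd0)).
rewrite ltr_pdivrMr //; set k := Num.bound _ => v0k.
have [v Pv [vd|vk]] := iter_step k; first by exists v.
by have := P_ge0 _ Pv; lra.
Qed.

Section Operators.
Variables (R : realType) (V : lmodType R[i]) (ip : V -> V -> R[i]).
Hypothesis ipH : is_hilbert ip.
Local Notation sqnorm := (sqnorm ip).

Lemma bounded_sqnorm f : bounded_op ip f ->
  exists2 K, 0 < K & forall x, sqnorm (f x) <= K * sqnorm x.
Proof.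
case=> _ [M fM]; exists (M ^+ 2 + 1) => [|x].
  by rewrite ltr_pwDr ?sqr_ge0.
have := fM x; rewrite /hnorm -/(sqnorm _) -/(sqnorm _) => le_fx.
have := sqr_sqrtr (sqnorm_ge0 ipH (f x)); have := sqr_sqrtr (sqnorm_ge0 ipH x).
have := sqrtr_ge0 (sqnorm (f x)); have := sqrtr_ge0 (sqnorm x).
move: le_fx; set a := Num.sqrt _; set b := Num.sqrt _ => le_ab b0 a0 <- <-.
have : a ^+ 2 <= (M * b) ^+ 2 by rewrite !expr2; nra.
by rewrite exprMn; nra.
Qed.

Lemma iter_sqnorm_le f K k : 0 <= K ->
  (forall x, sqnorm (f x) <= K * sqnorm x) ->
  forall x, sqnorm (iter k f x) <= K ^+ k * sqnorm x.
Proof.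
move=> K0 fK; elim: k => [|k IHk] x /=; first by rewrite expr0 mul1r.
by rewrite exprS -mulrA; apply: le_trans (fK _) _; rewrite ler_wpM2l.
Qed.

Lemma adjoint_linear S W : is_adjoint ip S W -> linear W.
Proof.
move=> SW a x y; apply: (ipr_ext ipH) => z.
by rewrite -SW ipDr // ipZr // ipDr // ipZr // -!SW.
Qed.

Lemma adjoint_sqnorm_le S W K : is_adjoint ip S W -> 0 < K ->
  (forall x, sqnorm (S x) <= K * sqnorm x) ->
  forall x, sqnorm (W x) <= K * sqnorm x.
Proof.
move=> SW K0 SK x.
have Ki0 : 0 < K^-1 by rewrite invr_gt0.
have := Re_ip_le ipH (S (W x)) x Ki0; rewrite invrK SW -/(sqnorm _).
have : K^-1 * sqnorm (S (W x)) <= sqnorm (W x).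
  by rewrite ler_pdivrMl // SK.
by rewrite mulrC; lra.
Qed.

Lemma sqnorm_descent S W K r : is_adjoint ip S W -> 0 < K ->
  (forall x, sqnorm (S x) <= K * sqnorm x) ->
  sqnorm (r - (K^-1)%:C *: W (S r)) <= sqnorm r - K^-1 * sqnorm (S r).
Proof.
move=> SW K0 SK; have Ki0 : 0 <= K^-1 by rewrite invr_ge0 ltW.
rewrite sqnormB // sqnormZ // Re_ipZr // -SW -/(sqnorm _).
have : K^-1 ^+ 2 * sqnorm (W (S r)) <= K^-1 * sqnorm (S r).
  rewrite expr2 -mulrA ler_wpM2l // ler_pdivrMl //.
  exact: adjoint_sqnorm_le SW K0 SK _.
lra.
Qed.

Lemma selfadjoint_range_eq E F : is_adjoint ip E E -> is_adjoint ip F F ->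
  (forall x, E (F x) = F x) -> (forall x, F (E x) = E x) ->
  forall x, E x = F x.
Proof.
move=> Esa Fsa EF FE x; apply: (ipr_ext ipH) => z.
by rewrite -FE -Fsa -Esa EF Fsa.
Qed.

Lemma selfadjoint_kernel_eq E F : is_adjoint ip E E -> is_adjoint ip F F ->
  (forall x, E (F x) = E x) -> (forall x, F (E x) = F x) ->
  forall x, E x = F x.
Proof.
move=> Esa Fsa EF FE x; apply: (ipr_ext ipH) => z.
by rewrite -Esa -EF Esa Fsa FE.
Qed.

Lemma MP_inverse_unique T S S' :
  is_MP_inverse ip T S -> is_MP_inverse ip T S' -> forall x, S x = S' x.
Proof.
case=> _ TST STS Qsa Psa [_ TST' STS' Qsa' Psa'] x.
have P y : T (S y) = T (S' y).
  exact: selfadjoint_range_eq Psa Psa' (fun y => TST (S' y))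
    (fun y => TST' (S y)) y.
have Q y : S (T y) = S' (T y).
  exact: selfadjoint_kernel_eq Qsa Qsa' (fun y => congr1 S (TST' y))
    (fun y => congr1 S' (TST y)) y.
by rewrite -STS P Q STS'.
Qed.

Lemma ReIm_le_form_sub A K u r eps : linear A -> 0 <= K ->
  (forall x, sqnorm (A x) <= K * sqnorm x) -> 0 < eps -> eps <= 1 ->
  sqnorm r <= eps ^+ 2 / (1 + K) ->
  ReIm_le (ip (A u) u - ip (A (u - r)) (u - r))
          (eps * (sqnorm (A u) + sqnorm u + 4)).
Proof.
move=> A_lin K0 AK eps0 eps1 r_small.
have eps2_le1 : eps ^+ 2 <= 1 by rewrite expr2; nra.
have := sqnorm_ge0 ipH r; move: r_small.
rewrite ler_pdivlMr ?ltr_pwDl // => r_small r0.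
have r_le : sqnorm r <= eps ^+ 2 by nra.
have Ar_le : sqnorm (A r) <= eps ^+ 2 by apply: le_trans (AK r) _; nra.
have -> : ip (A u) u - ip (A (u - r)) (u - r)
          = ip (A u) r + ip (A r) u - ip (A r) r.
  by rewrite linB // (ipBl ipH) !(ipBr ipH); ring.
apply: ReIm_leW (ReIm_leD (ReIm_leD (ReIm_le_ip ipH (A u) eps0 r_le)
  (ReIm_le_ipC ipH u eps0 Ar_le)) (ReIm_leN (ReIm_le_ip ipH (A r) eps0 r_le))).
rewrite -!mulrDr; apply: ler_wpM2l; first exact: ltW.
have := le_trans Ar_le eps2_le1; lra.
Qed.

End Operators.

Section CauchyDual.
Variables (R : realType) (V : lmodType R[i]) (ip : V -> V -> R[i]).
Hypothesis ipH : is_hilbert ip.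
Local Notation sqnorm := (sqnorm ip).
Variables (T S W : V -> V).
Hypotheses (T_bd : bounded_op ip T) (S_bd : bounded_op ip S).
Hypothesis TST : forall x, T (S (T x)) = T x.
Hypothesis STS : forall x, S (T (S x)) = S x.
Hypothesis TS_sa : forall a b, ip (T (S a)) b = ip a (T (S b)).
Hypothesis SW : is_adjoint ip S W.

Lemma TS_W y : T (S (W y)) = W y.
Proof. by apply: (ipr_ext ipH) => z; rewrite -TS_sa -SW STS SW. Qed.

Lemma range_approx u d : T (S u) = u -> 0 < d ->
  exists y, sqnorm (u - W y) <= d.
Proof.
move=> TSu d0.
have [KT KT0 TK] := bounded_sqnorm ipH T_bd.
have [KS KS0 SK] := bounded_sqnorm ipH S_bd.
have g0 : 0 < (KS * KT)^-1 by rewrite invr_gt0 mulr_gt0.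
pose attained v := exists y, sqnorm (u - W y) = v.
have step v : attained v ->
    exists2 v', attained v' & v' <= v - (KS * KT)^-1 * v.
  case=> y <-; set r := u - W y.
  have TSr : T (S r) = r by rewrite !linB ?TS_W ?TSu //; case: S_bd; case: T_bd.
  exists (sqnorm (r - (KS^-1)%:C *: W (S r))).
    exists ((KS^-1)%:C *: S r + y).
    by rewrite (adjoint_linear ipH SW) opprD addrA addrAC.
  apply: le_trans (sqnorm_descent ipH r SW KS0 SK) _.
  rewrite lerD2l lerN2 invfM -mulrA ler_pM2l ?invr_gt0 //.
  by rewrite ler_pdivrMl // -{1}TSr TK.
have attained_ge0 v : attained v -> 0 <= v by case=> y <-; exact: sqnorm_ge0.
have [v [y <-] le_d] := descent_le g0 (ex_intro _ 0 erefl) attained_ge0 step d0.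
by exists y.
Qed.

Variable n : nat.
Hypothesis n_gt0 : (0 < n)%N.
Hypothesis comm : forall x, iter n T (S x) = S (iter n T x).
Local Notation A := (iter (2 * n) T).

Lemma iter_TS x : iter n T (T (S x)) = iter n T x.
Proof.
rewrite -iterSr iterS comm.
by case: n n_gt0 comm => // m _ _; rewrite iterS TST.
Qed.

Lemma A_TS x : A (T (S x)) = A x.
Proof. by rewrite mul2n -addnn !iterD iter_TS. Qed.

Lemma TS_A x : T (S (A x)) = A x.
Proof.
by rewrite -(prednK (_ : 0 < 2 * n)%N) ?muln_gt0 ?n_gt0 // iterS TST.
Qed.

Lemma A_S x : A (S x) = S (A x).
Proof. by rewrite mul2n -addnn !iterD !comm. Qed.

Lemma ip_iterW y : ip (iter (2 * n - 1) T (W y)) y = ip (A (W y)) (W y).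
Proof.
have -> : iter (2 * n - 1) T (W y) = S (A (W y)).
  by rewrite -A_S -TS_W -iterSr subn1 prednK ?muln_gt0 // TS_W.
by rewrite SW.
Qed.

Lemma ip_A_TS x : ip (A x) x = ip (A (T (S x))) (T (S x)).
Proof. by rewrite -{1}(A_TS x) -{1}(TS_A (T (S x))) TS_sa. Qed.

Lemma positive_iterW :
  positive_op ip A -> positive_op ip (fun y => iter (2 * n - 1) T (W y)).
Proof. by move=> A_ge0 y; rewrite ip_iterW. Qed.

Lemma positive_of_iterW :
  positive_op ip (fun y => iter (2 * n - 1) T (W y)) -> positive_op ip A.
Proof.
move=> B_ge0 x; rewrite ip_A_TS; set u := T (S x).
have TSu : T (S u) = u by rewrite /u TST.
have [K K0 TK] := bounded_sqnorm ipH T_bd.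
have AK := iter_sqnorm_le (2 * n) (ltW K0) TK.
have T_lin : linear T by case: T_bd.
apply: (ge0_ReIm_approx (C := sqnorm (A u) + sqnorm u + 4)).
  by have := sqnorm_ge0 ipH (A u); have := sqnorm_ge0 ipH u; lra.
move=> eps eps0 eps1.
have d0 : 0 < eps ^+ 2 / (1 + K ^+ (2 * n)).
  by rewrite divr_gt0 ?exprn_gt0 // ltr_pwDl ?exprn_ge0 ?ltW.
have [y le_d] := range_approx TSu d0.
exists (ip (A (W y)) (W y)); first by rewrite -ip_iterW; exact: B_ge0.
have := ReIm_le_form_sub ipH u (linear_iter _ T_lin) (exprn_ge0 _ (ltW K0))
  AK eps0 eps1 le_d.
by rewrite subKr.
Qed.

Lemma positive_iter_iff :
  positive_op ip A <-> positive_op ip (fun y => iter (2 * n - 1) T (W y)).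
Proof. by split; [exact: positive_iterW | exact: positive_of_iterW]. Qed.

End CauchyDual.

Theorem mainTheorem11 (R : realType) (V : lmodType R[i]) (ip : V -> V -> R[i])
  (n : nat) (T W : V -> V) :
  is_hilbert ip -> (1 <= n)%N -> bounded_op ip T -> n_EP ip n T ->
  is_cauchy_dual ip T W ->
  (positive_op ip (iter (2 * n) T) <->
   positive_op ip (fun x => iter (2 * n - 1) T (W x))).
Proof.
move=> ipH n_gt0 T_bd [_ [S' [S'_MP comm']]] [S [S_MP SW]].
have S'S := MP_inverse_unique ipH S'_MP S_MP.
have comm x : iter n T (S x) = S (iter n T x) by rewrite -!S'S comm'.
case: S_MP => S_bd TST STS _ TS_sa.
exact (positive_iter_iff ipH T_bd S_bd TST STS TS_sa SW n_gt0 comm).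
Qed.
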